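(* Let $R>0$, $x_0\in\mathbb{R}^d$ and $u\in\mathcal{P}^F_R(x_0)$. Then $$\sup_{\partial B_r(x_0)}u\ge C r^\beta\qquad\text{for all }0<r<R,$$ where $\beta=\frac{2}{2-\gamma}$ and $C>0$ is a constant depending only on $d$, $\Lambda$ and $\gamma$.
   Context: Fix $d\ge1$, $\Lambda\ge1$, $\gamma\in(1,2)$. $\mathcal{S}_d$ is the space of real symmetric $d\times d$ matrices. Standing assumptions on $F:\mathcal{S}_d\to\mathbb{R}$: (i) uniform ellipticity: $\frac1\Lambda\|P\|\le F(M+P)-F(M)\le\Lambda\|P\|$ for all $M,P\in\mathcal{S}_d$, $P\ge0$; (ii) $F$ is convex, $F(0)=0$, and the trace map is a sub-differential of $F$ at $0$ (i.e. $\mathrm{trace}(M)\le F(M)$ for all $M$); (iii) either $F$ is (Gâteaux) differentiable at $0$, or $F(\lambda M)=\lambda F(M)$ for all $\lambda>0$, $M\in\mathcal{S}_d$. $\mathcal{P}^F_R(x_0)$ is the class of continuous viscosity solutions $u$ of $F(D^2u)=u^{\gamma-1}$, $u\ge0$ in $B_R(x_0)$, such that $x_0\in\partial\{u>0\}$. *)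

From HB Require Import structures.
From mathcomp Require Import all_boot all_order all_algebra.
From mathcomp Require Import all_classical all_reals all_analysis.
Set Implicit Arguments. Unset Strict Implicit. Unset Printing Implicit Defensive.
Import Order.TTheory GRing.Theory Num.Theory.
Import numFieldNormedType.Exports.
Local Open Scope classical_set_scope.
Local Open Scope ring_scope.

Section Defs.
Variables (R : realType) (d : nat).

(* Euclidean norm on R^d (the library norm on 'rV is the sup norm). *)
Definition enorm (v : 'rV[R]_d) : R := Num.sqrt (\sum_(i < d) v ord0 i ^+ 2).

Definition eball (x : 'rV[R]_d) (r : R) : set 'rV[R]_d :=
  [set y | enorm (y - x) < r].
Definition esphere (x : 'rV[R]_d) (r : R) : set 'rV[R]_d :=
  [set y | enorm (y - x) = r].

Definition symmetric (M : 'M[R]_d) : Prop := M^T = M.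
Definition psd (P : 'M[R]_d) : Prop :=
  symmetric P /\ forall v : 'rV[R]_d, 0 <= (v *m P *m v^T) ord0 ord0.

Definition opnorm (P : 'M[R]_d) : R :=
  sup [set enorm (v *m P^T) | v in [set v : 'rV[R]_d | enorm v = 1]].

(* Standing assumptions (i)-(iii) on F : S_d -> R;
   F is given on all matrices but only its values on S_d matter. *)
Definition unif_elliptic (Lam : R) (F : 'M[R]_d -> R) : Prop :=
  forall M P : 'M[R]_d, symmetric M -> psd P ->
    Lam^-1 * opnorm P <= F (M + P) - F M /\ F (M + P) - F M <= Lam * opnorm P.

Definition convex_on_Sd (F : 'M[R]_d -> R) : Prop :=
  forall (M N : 'M[R]_d) (t : R), symmetric M -> symmetric N -> 0 <= t <= 1 ->
    F (t *: M + (1 - t) *: N) <= t * F M + (1 - t) * F N.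

Definition gateaux_diff_at0 (F : 'M[R]_d -> R) : Prop :=
  exists L : 'M[R]_d -> R,
    (forall (a b : R) (M N : 'M[R]_d), symmetric M -> symmetric N ->
        L (a *: M + b *: N) = a * L M + b * L N) /\
    (forall N : 'M[R]_d, symmetric N ->
        (fun t : R => (F (t *: N) - F 0) / t) @ 0^' --> L N).

Definition pos_homogeneous (F : 'M[R]_d -> R) : Prop :=
  forall (lam : R) (M : 'M[R]_d), 0 < lam -> symmetric M -> F (lam *: M) = lam * F M.

Definition standing_assumptions (Lam : R) (F : 'M[R]_d -> R) : Prop :=
  [/\ unif_elliptic Lam F,
      convex_on_Sd F, F 0 = 0,
      (forall M : 'M[R]_d, symmetric M -> \tr M <= F M) &
      (gateaux_diff_at0 F \/ pos_homogeneous F)].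

Definition evec (i : 'I_d) : 'rV[R]_d := delta_mx ord0 i.

Definition partial (i : 'I_d) (f : 'rV[R]_d -> R) : 'rV[R]_d -> R :=
  fun x => derive f x (evec i).

Definition C2_on (U : set 'rV[R]_d) (f : 'rV[R]_d -> R) : Prop :=
  forall y, U y -> forall i j : 'I_d,
    [/\ derivable f y (evec i),
        derivable (partial i f) y (evec j) &
        {for y, continuous (partial j (partial i f))}].

Definition hessian (f : 'rV[R]_d -> R) (x : 'rV[R]_d) : 'M[R]_d :=
  \matrix_(i, j) partial j (partial i f) x.

Definition visc_subsol (F : 'M[R]_d -> R) (g : R) (U : set 'rV[R]_d)
    (u : 'rV[R]_d -> R) : Prop :=
  forall (x : 'rV[R]_d) (phi : 'rV[R]_d -> R) (del : R), U x -> 0 < del ->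
    C2_on (eball x del) phi ->
    (forall y, eball x del y -> U y -> u y - phi y <= u x - phi x) ->
    F (hessian phi x) >= u x `^ (g - 1).

Definition visc_supersol (F : 'M[R]_d -> R) (g : R) (U : set 'rV[R]_d)
    (u : 'rV[R]_d -> R) : Prop :=
  forall (x : 'rV[R]_d) (phi : 'rV[R]_d -> R) (del : R), U x -> 0 < del ->
    C2_on (eball x del) phi ->
    (forall y, eball x del y -> U y -> u y - phi y >= u x - phi x) ->
    F (hessian phi x) <= u x `^ (g - 1).

Definition classP (F : 'M[R]_d -> R) (g R0 : R) (x0 : 'rV[R]_d)
    (u : 'rV[R]_d -> R) : Prop :=
  let U := eball x0 R0 in
  [/\ {in U, continuous u},
      (forall x, U x -> 0 <= u x),
      visc_subsol F g U u, visc_supersol F g U u &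
      (closure [set y | 0 < u y] x0 /\ ~ interior [set y | 0 < u y] x0)].

End Defs.

From HB Require Import structures.
From mathcomp Require Import all_boot all_order all_algebra.
From mathcomp Require Import all_classical all_reals all_analysis.
From mathcomp Require Import ring lra.
Import Order.TTheory GRing.Theory Num.Theory.
Import numFieldNormedType.Exports.
Local Open Scope classical_set_scope.
Local Open Scope ring_scope.

(* Barrier argument.  Suppose [sup_{∂B_r(x0)} u < C r^β].  Pick [y] close to
   [x0] with [u y > 0] and compare [u] on the closed ball [B_r(x0)] with the
   separable barrier [ψ w = A Σ_k ((w_k - y_k) / 2r)^(m+2)], [m] even, which
   vanishes at [y] and exceeds [C r^β] on the sphere.  Then [u - ψ] has a
   positive maximum at an interior point [z], where the subsolution property
   gives [u z ^ (γ-1) <= F (D²ψ z) <= Λ ‖D²ψ z‖].  The height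
   [A = ((2r)² / (Λ (m+2)(m+1)))^(1/(2-γ))], which scales like [r^β] with
   [β = 2/(2-γ)], makes this incompatible with [u z > ψ z >= A q^(m+2)],
   where [q = max_k |z_k - y_k| / 2r <= 1], as soon as [(m+2)(γ-1) <= m]:
   indeed [Λ ‖D²ψ z‖ <= A^(γ-1) q^m <= (A q^(m+2))^(γ-1)]. *)

Set Implicit Arguments. Unset Strict Implicit.

Section PowerProfile.
Variable R : realType.
Implicit Types (c a rho s t : R) (n : nat).

Definition pow_profile c a rho n s : R := c * ((s - a) / rho) ^+ n.

Lemma is_derive_pow_profile c a rho n t :
  is_derive t (1 : R) (pow_profile c a rho n) (pow_profile (c * n%:R / rho) a rho n.-1 t).
Proof.
have lin : is_derive t (1 : R) (fun s : R => (s - a) / rho) rho^-1.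
  have -> : (fun s : R => (s - a) / rho) = rho^-1 \*: (id - cst a).
    by apply/funext => s /=; rewrite mulrC.
  have := is_deriveZ rho^-1 (is_deriveB (is_derive_id t (1 : R)) (is_derive_cst a t 1)).
  by rewrite subr0 /GRing.scale /= mulr1.
have -> : pow_profile c a rho n = c \*: (fun s : R => (s - a) / rho) ^+ n.
  by apply/funext => s /=; rewrite /pow_profile exprfctE.
apply: is_derive_eq (is_deriveZ c (is_deriveX n lin)) _.
by rewrite /pow_profile /GRing.scale /=; ring.
Qed.

Lemma derive1_pow_profile c a rho n :
  derive1 (pow_profile c a rho n) = pow_profile (c * n%:R / rho) a rho n.-1.
Proof. by apply/funext => t; rewrite derive1E; case: (is_derive_pow_profile c a rho n t). Qed.

Lemma derivable_pow_profile c a rho n t : derivable (pow_profile c a rho n) t 1.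
Proof. by case: (is_derive_pow_profile c a rho n t). Qed.

Lemma continuous_pow_profile c a rho n : continuous (pow_profile c a rho n).
Proof.
move=> t; apply: differentiable_continuous.
exact/derivable1_diffP/derivable_pow_profile.
Qed.

End PowerProfile.

Section CoordSum.
Variables (R : realType) (d : nat).
Implicit Types (g : 'I_d -> R -> R) (x : 'rV[R]_d).

Definition coordsum g x : R := \sum_j g j (x ord0 j).

Lemma coordsum_difference_quotient g i x :
  (fun h : R => h^-1 *: ((coordsum g \o shift x) (h *: evec R i) - coordsum g x)) =
  (fun h : R => h^-1 *: ((g i \o shift (x ord0 i)) (h *: (1 : R)) - g i (x ord0 i))).
Proof.
apply/funext => h /=; rewrite /coordsum -sumrB (bigD1 i) //= big1 ?addr0.
  by rewrite !mxE !eqxx /= mulr1 /GRing.scale /= mulr1.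
by move=> j ji; rewrite !mxE (negbTE ji) andbF /= mulr0 add0r subrr.
Qed.

Lemma derivable_coordsum g i x :
  derivable (g i) (x ord0 i) 1 -> derivable (coordsum g) x (evec R i).
Proof. by rewrite /derivable coordsum_difference_quotient. Qed.

Lemma partial_coordsum g i :
  partial i (coordsum g) = fun x => derive1 (g i) (x ord0 i).
Proof.
by apply/funext => x; rewrite /partial /derive coordsum_difference_quotient derive1E.
Qed.

Lemma coordsum_coord (f : R -> R) i :
  (fun x => f (x ord0 i)) = coordsum (fun j => if j == i then f else cst 0).
Proof.
apply/funext => x; rewrite /coordsum (bigD1 i) //= eqxx big1 ?addr0 //.
by move=> j /negbTE ->.
Qed.

Lemma partial2_coordsum g i j :
  partial j (partial i (coordsum g)) =
  fun x => derive1 (if j == i then derive1 (g i) else cst 0) (x ord0 j).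
Proof. by rewrite partial_coordsum coordsum_coord partial_coordsum. Qed.

Lemma hessian_coordsum g x :
  hessian (coordsum g) x = diag_mx (\row_j derive1 (derive1 (g j)) (x ord0 j)).
Proof.
apply/matrixP => i j; rewrite !mxE partial2_coordsum.
case: eqP => [->|/eqP ji]; first by rewrite eqxx mulr1n.
by rewrite eq_sym (negbTE ji) mulr0n derive1_cst.
Qed.

Lemma continuous_coordsum g : (forall j, continuous (g j)) -> continuous (coordsum g).
Proof.
move=> gc; rewrite /coordsum; elim: (index_enum _) => [|j s IH].
  under [X in continuous X]funext do rewrite big_nil.
  exact: cst_continuous.
under [X in continuous X]funext do rewrite big_cons.
move=> x; apply: continuousD; last exact: IH.
apply: (@continuous_comp _ _ _ (fun x : 'rV[R]_d => x ord0 j)); last exact: gc.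
exact: coord_continuous.
Qed.

Lemma C2_on_coordsum g (U : set 'rV[R]_d) :
  (forall j t, derivable (g j) t 1) ->
  (forall j t, derivable (derive1 (g j)) t 1) ->
  (forall j, continuous (derive1 (derive1 (g j)))) ->
  C2_on U (coordsum g).
Proof.
move=> g1 g2 g2c y _ i j; split.
- exact: derivable_coordsum.
- rewrite partial_coordsum coordsum_coord; apply: derivable_coordsum.
  by case: (j == i); [exact: g2 | exact: derivable_cst].
- rewrite partial2_coordsum.
  apply: (@continuous_comp _ _ _ (fun x : 'rV[R]_d => x ord0 j)).
    exact: coord_continuous.
  case: (j == i); first exact: g2c.
  rewrite (_ : derive1 (cst (0 : R)) = cst 0); first exact: cst_continuous.
  by apply/funext => t; rewrite derive1_cst.
Qed.

End CoordSum.

Lemma exists_ord_max (R : realDomainType) (d : nat) (i0 : 'I_d) (f : 'I_d -> R) :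
  exists i, forall j, f j <= f i.
Proof.
exists (Order.arg_max i0 xpredT f).
by case: (@Order.TotalTheory.arg_maxP _ _ _ i0 xpredT f) => // i _ imax j; exact: imax.
Qed.

Lemma closure_exists_near (K : numFieldType) (V : normedModType K) (S : set V) (x : V) (e : K) :
  closure S x -> 0 < e -> exists2 y, S y & `|y - x| < e.
Proof.
move=> Sx e0; have [y [Sy xy]] := Sx _ (nbhsx_ballx x e e0).
by exists y => //; rewrite distrC; move: xy; rewrite -ball_normE.
Qed.

Section EuclideanNorm.
Variables (R : realType) (d : nat).
Implicit Types (v x : 'rV[R]_d).

Lemma enorm_ge0 v : 0 <= enorm v.
Proof. exact: sqrtr_ge0. Qed.

Lemma enorm_evec (i : 'I_d) : enorm (evec R i) = 1.
Proof.
rewrite /enorm (bigD1 i) //= big1 ?addr0.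
  by rewrite !mxE !eqxx /= expr1n sqrtr1.
by move=> j ji; rewrite !mxE (negbTE ji) andbF /= expr0n.
Qed.

Lemma normr_coord_le_enorm v i : `|v ord0 i| <= enorm v.
Proof.
rewrite -sqrtr_sqr /enorm ler_wsqrtr // (bigD1 i) //= lerDl.
by apply: sumr_ge0 => j _; rewrite sqr_ge0.
Qed.

Lemma enorm_le_coord v (e : R) :
  0 <= e -> (forall i, `|v ord0 i| <= e) -> enorm v <= d%:R * e.
Proof.
move=> e0 ve; rewrite -(ger0_norm (_ : 0 <= d%:R * e)) ?mulr_ge0 //.
rewrite -sqrtr_sqr ler_wsqrtr //.
apply: (@le_trans _ _ (\sum_(j < d) e ^+ 2)).
  apply: ler_sum => j _; rewrite -[v ord0 j ^+ 2]ger0_norm ?sqr_ge0 // normrX.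
  by rewrite ler_sqr ?nnegrE ?normr_ge0.
have dd : (d%:R : R) <= d%:R ^+ 2.
  case: d => [|n]; first by rewrite expr0n.
  by rewrite -natrX ler_nat expnS leq_pmulr // expn_gt0.
rewrite sumr_const card_ord -[e ^+ 2 *+ d]mulr_natr exprMn [_ * e ^+ 2]mulrC.
by apply: ler_wpM2l => //; exact: sqr_ge0.
Qed.

Lemma mx_normr_coord v i : `|v ord0 i| <= `|v|.
Proof.
rewrite [leRHS]/Num.Def.normr /= mx_normrE.
exact: (le_bigmax _ (fun ij : 'I_1 * 'I_d => `|v ij.1 ij.2|) (ord0, i)).
Qed.

Lemma mx_norm_le_enorm v : `|v| <= enorm v.
Proof.
rewrite [leLHS]/Num.Def.normr /= mx_normrE; apply/bigmax_leP; split.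
  exact: enorm_ge0.
by move=> [i j] _ /=; rewrite (ord1 i); exact: normr_coord_le_enorm.
Qed.

Lemma enorm_le_mx_norm v : enorm v <= d%:R * `|v|.
Proof. exact: enorm_le_coord (normr_ge0 _) (mx_normr_coord v). Qed.

Lemma exists_coord_enorm_le v : (0 < d)%N -> exists i, enorm v <= d%:R * `|v ord0 i|.
Proof.
move=> d0; have [i imax] := exists_ord_max (Ordinal d0) (fun k => `|v ord0 k|).
by exists i; apply: enorm_le_coord.
Qed.

Lemma continuous_enorm_sub x : continuous (fun y : 'rV[R]_d => enorm (y - x)).
Proof.
have -> : (fun y : 'rV[R]_d => enorm (y - x)) =
    Num.sqrt \o coordsum (fun j t => (t - x ord0 j) ^+ 2).
  apply/funext => y; rewrite /enorm /coordsum /=; congr Num.sqrt.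
  by apply: eq_bigr => j _; rewrite !mxE.
move=> y; apply: continuous_comp; last exact: sqrt_continuous.
apply: continuous_coordsum => j t.
apply: (@continuous_comp _ _ _ (fun t : R => t - x ord0 j) (fun t => t ^+ 2)).
  by apply: continuousB; [exact: cvg_id | exact: cvg_cst].
exact: exprn_continuous.
Qed.

Definition ecball x (r : R) : set 'rV[R]_d := [set y | enorm (y - x) <= r].

Lemma open_eball x (r : R) : open (eball x r).
Proof.
have := open_comp (f := fun y : 'rV[R]_d => enorm (y - x)) (D := [set t | t < r]).
apply => [y _|].
  exact: continuous_enorm_sub.
exact: open_lt.
Qed.

Lemma eball_subset_eball x (r : R) z :
  eball x r z -> exists2 e, 0 < e & eball z e `<=` eball x r.
Proof.
move=> xz; have /nbhs_ballP [e e0 ze] := open_eball xz.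
exists e => // w zw; apply: ze; rewrite -ball_normE /= distrC.
exact: le_lt_trans (mx_norm_le_enorm _) zw.
Qed.

Lemma compact_ecball x (r : R) : compact (ecball x r).
Proof.
apply: bounded_closed_compact; last first.
  have := preimage_closed (f := fun y : 'rV[R]_d => enorm (y - x)) (D := [set t | t <= r]).
  apply => [y _|].
    exact: continuous_enorm_sub.
  exact: closed_le.
have le_r : forall y, ecball x r y -> `|y| <= r + `|x|.
  move=> y xy; rewrite -[y](subrK x); apply: le_trans (ler_normD _ _) _.
  by rewrite lerD2r; apply: le_trans (mx_norm_le_enorm _) xy.
apply: filterS (nbhs_pinfty_ge (num_real (r + `|x|))) => M rM y xy.
exact: le_trans (le_r y xy) rM.
Qed.

End EuclideanNorm.

Section DiagonalHessian.
Variables (R : realType) (d : nat).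
Implicit Types (w : 'rV[R]_d) (c : R).

Lemma psd_diag_mx w : (forall j, 0 <= w ord0 j) -> psd (diag_mx w).
Proof.
move=> w0; split; first exact: tr_diag_mx.
move=> v; rewrite mul_mx_diag !mxE; apply: sumr_ge0 => j _.
by rewrite !mxE mulrAC mulr_ge0 // -expr2 sqr_ge0.
Qed.

Lemma opnorm_diag_mx_le w c (i0 : 'I_d) :
  (forall j, 0 <= w ord0 j <= c) -> opnorm (diag_mx w) <= c.
Proof.
move=> wc; rewrite /opnorm; apply: ge_sup.
  by exists (enorm (evec R i0 *m (diag_mx w)^T)), (evec R i0) => //; exact: enorm_evec.
move=> _ [v /= v1 <-].
have c0 : 0 <= c by case/andP: (wc i0) => /le_trans; apply.
rewrite tr_diag_mx mul_mx_diag.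
have -> : c = Num.sqrt (c ^+ 2 * \sum_j v ord0 j ^+ 2).
  by rewrite sqrtrM ?sqr_ge0 // sqrtr_sqr ger0_norm // -/(enorm v) v1 mulr1.
rewrite ler_wsqrtr // mulr_sumr; apply: ler_sum => j _.
rewrite !mxE exprMn mulrC ler_wpM2r ?sqr_ge0 //.
by case/andP: (wc j) => wj0 wjc; rewrite ler_sqr.
Qed.

Lemma elliptic_diag_mx_le (Lam : R) (F : 'M[R]_d -> R) w c (i0 : 'I_d) :
  unif_elliptic Lam F -> F 0 = 0 -> 0 <= Lam ->
  (forall j, 0 <= w ord0 j <= c) -> F (diag_mx w) <= Lam * c.
Proof.
move=> ellF F0 Lam0 wc.
have w0 j : 0 <= w ord0 j by case/andP: (wc j).
have [_] := ellF 0 (diag_mx w) (trmx0 _ _ _) (psd_diag_mx w0).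
rewrite add0r F0 subr0 => /le_trans; apply.
by rewrite ler_wpM2l // (opnorm_diag_mx_le i0).
Qed.

End DiagonalHessian.

Section Exponents.
Variables (R : realType) (gamma : R).
Hypothesis gamma12 : 1 < gamma < 2.

Let gamma_gt1 : 1 < gamma. Proof. by case/andP: gamma12. Qed.
Let gamma_lt2 : gamma < 2. Proof. by case/andP: gamma12. Qed.

Lemma exists_even_exponent : exists m, ~~ odd m /\ (m.+2)%:R * (gamma - 1) <= m%:R :> R.
Proof.
pose j := (Num.truncn (2 - gamma)^-1).+1.
have jgt : (2 - gamma)^-1 < j%:R by exact: truncnS_gt.
exists j.*2; split; first by rewrite odd_double.
have g2 : 0 < 2 - gamma by rewrite subr_gt0.
have inv : (2 - gamma)^-1 * (2 - gamma) = 1 by rewrite mulVf ?gt_eqF.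
rewrite -addn2 natrD -!muln2 !natrM; nra.
Qed.

Lemma pow_le_powR_exponent (q : R) (m : nat) :
  0 <= q <= 1 -> (m.+2)%:R * (gamma - 1) <= m%:R -> q ^+ m <= (q ^+ m.+2) `^ (gamma - 1).
Proof.
move=> /andP[q0 q1] mle.
have [->|qn0] := eqVneq q 0.
  case: m mle => [mle|m _]; last by rewrite expr0n powR_ge0.
  by have := gamma_gt1; lra.
have qgt0 : 0 < q by rewrite lt_def qn0 q0.
rewrite -!powR_mulrn // -powRrM.
by apply: ger_powR => //; rewrite qgt0 q1.
Qed.

Lemma powR_root_height (X : R) : 0 < X ->
  (X `^ (2 - gamma)^-1) `^ (gamma - 1) = X `^ (2 - gamma)^-1 / X.
Proof.
move=> X0.
have -> : gamma - 1 = 1 + (gamma - 2) by ring.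
rewrite powRD; last by apply/implyP => _; rewrite gt_eqF // powR_gt0.
rewrite powRr1 ?powR_ge0 //; congr (_ * _).
rewrite -powRrM (_ : (2 - gamma)^-1 * (gamma - 2) = -1); first by rewrite powR_inv1 // ltW.
have -> : gamma - 2 = - (2 - gamma) by ring.
by rewrite mulrN mulVf // subr_eq0 gt_eqF.
Qed.

Lemma barrier_power_ineq (L rho A q : R) (m : nat) :
  0 < L -> 0 < rho -> A = (rho ^+ 2 / L) `^ (2 - gamma)^-1 ->
  0 <= q <= 1 -> (m.+2)%:R * (gamma - 1) <= m%:R ->
  L * A / rho ^+ 2 * q ^+ m <= (A * q ^+ m.+2) `^ (gamma - 1).
Proof.
move=> L0 rho0 Adef q01 mle.
have X0 : 0 < rho ^+ 2 / L by rewrite divr_gt0 // exprn_gt0.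
have q0 : 0 <= q by case/andP: q01.
have A0 : 0 <= A by rewrite Adef powR_ge0.
have Agamma : A `^ (gamma - 1) = L * A / rho ^+ 2.
  by rewrite Adef powR_root_height // -Adef invf_div mulrCA mulrA.
rewrite powRM ?exprn_ge0 // Agamma ler_wpM2l ?pow_le_powR_exponent //.
by rewrite divr_ge0 ?exprn_ge0 ?mulr_ge0 // ltW.
Qed.

End Exponents.

Lemma powR_square_scale (R : realType) (p L r : R) : 0 < L -> 0 < r ->
  ((2 * r) ^+ 2 / L) `^ p = (4 / L) `^ p * r `^ (2 * p).
Proof.
move=> L0 r0.
have -> : (2 * r) ^+ 2 / L = 4 / L * r ^+ 2.
  by rewrite exprMn mulrAC; congr (_ * _ * _); rewrite expr2 -natrM.
rewrite powRM ?exprn_ge0 ?ltW ?divr_gt0 //.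
by rewrite -powR_mulrn ?ltW // -powRrM.
Qed.

Definition barrier_level (R : realType) (Lam : R) (m : nat) : R :=
  Lam * (m.+2%:R * m.+1%:R).

Section Barrier.
Variables (R : realType) (d : nat).
Implicit Types (A rho : R) (y w : 'rV[R]_d).

Definition barrier A rho (n : nat) y : 'rV[R]_d -> R :=
  coordsum (fun k => pow_profile A (y ord0 k) rho n).

Lemma continuous_barrier A rho n y : continuous (barrier A rho n y).
Proof. by apply: continuous_coordsum => k; exact: continuous_pow_profile. Qed.

Lemma C2_on_barrier A rho n y (U : set 'rV[R]_d) : C2_on U (barrier A rho n y).
Proof.
apply: C2_on_coordsum => k.
- exact: derivable_pow_profile.
- by rewrite derive1_pow_profile; exact: derivable_pow_profile.
- by rewrite !derive1_pow_profile; exact: continuous_pow_profile.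
Qed.

Lemma hessian_barrier A rho n y w :
  hessian (barrier A rho n y) w =
  diag_mx (\row_k pow_profile (A * n%:R / rho * n.-1%:R / rho) (y ord0 k) rho n.-2 (w ord0 k)).
Proof.
rewrite hessian_coordsum; congr diag_mx; apply/rowP => k.
by rewrite !mxE !derive1_pow_profile.
Qed.

Lemma barrier_center A rho n y : barrier A rho n.+1 y y = 0.
Proof.
by rewrite /barrier /coordsum big1 // => k _; rewrite /pow_profile subrr mul0r expr0n mulr0.
Qed.

Lemma barrier_ge_coord A rho n y w k : ~~ odd n -> 0 <= A ->
  A * `|(w ord0 k - y ord0 k) / rho| ^+ n <= barrier A rho n y w.
Proof.
move=> n_even A0.
have term k' :
    A * `|(w ord0 k' - y ord0 k') / rho| ^+ n = pow_profile A (y ord0 k') rho n (w ord0 k').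
  by rewrite /pow_profile -normrX ger0_norm // exprn_even_ge0.
rewrite term /barrier /coordsum (bigD1 k) //= lerDl sumr_ge0 // => k' _.
by rewrite -term mulr_ge0 ?exprn_ge0.
Qed.

Lemma barrier_ge_on_sphere A n y (x0 w : 'rV[R]_d) (r : R) :
  (0 < d)%N -> ~~ odd n -> 0 <= A -> 0 < r ->
  `|y - x0| <= r / (2 * d%:R) -> enorm (w - x0) = r ->
  A / (4 * d%:R) ^+ n <= barrier A (2 * r) n y w.
Proof.
move=> d0 n_even A0 r0 yx0 wr.
have dpos : 0 < d%:R :> R by rewrite ltr0n.
have [i ri] := exists_coord_enorm_le (w - x0) d0.
apply: le_trans (barrier_ge_coord (2 * r) y w i n_even A0).
rewrite -exprVn ler_wpM2l // lerXn2r ?nnegrE ?invr_ge0 ?mulr_ge0 ?ler0n //.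
rewrite normrM [`|_^-1|]gtr0_norm ?invr_gt0 ?mulr_gt0 // ler_pdivlMr ?mulr_gt0 //.
rewrite wr !mxE in ri; have := le_trans (mx_normr_coord (y - x0) i) yx0; rewrite !mxE => yi.
have wyx : `|w ord0 i - x0 ord0 i| <= `|w ord0 i - y ord0 i| + `|y ord0 i - x0 ord0 i|.
  by apply: le_trans (ler_normD _ _); rewrite addrA subrK.
set e := r / (2 * d%:R) in yi.
have -> : (4 * d%:R)^-1 * (2 * r) = e by rewrite /e; field; rewrite gt_eqF.
have de : 2 * d%:R * e = r by rewrite /e mulrC divfK // mulf_neq0 // gt_eqF.
nra.
Qed.

End Barrier.

Section BarrierComparison.
Variables (R : realType) (d : nat) (Lam gamma : R) (F : 'M[R]_d -> R).
Variables (U : set 'rV[R]_d) (u : 'rV[R]_d -> R) (m : nat).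
Hypotheses (d_gt0 : (0 < d)%N) (Lam_gt0 : 0 < Lam) (gamma12 : 1 < gamma < 2).
Hypotheses (ellF : unif_elliptic Lam F) (F0 : F 0 = 0) (u_sub : visc_subsol F gamma U u).
Hypotheses (m_even : ~~ odd m) (m_large : (m.+2)%:R * (gamma - 1) <= m%:R).

Let n := m.+2.
Let L := barrier_level Lam m.

Lemma elliptic_barrier_le (A rho q : R) (y z : 'rV[R]_d) :
  0 <= A -> 0 < rho -> (forall k, `|(z ord0 k - y ord0 k) / rho| <= q) ->
  F (hessian (barrier A rho n y) z) <= L * A / rho ^+ 2 * q ^+ m.
Proof.
move=> A0 rho0 zyq.
pose c := A * n%:R / rho * n.-1%:R / rho.
have c0 : 0 <= c by rewrite /c !divr_ge0 ?mulr_ge0 ?ler0n ?invr_ge0 ?(ltW rho0).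
rewrite hessian_barrier.
apply: le_trans (elliptic_diag_mx_le (c := c * q ^+ m) (Ordinal d_gt0) ellF F0 (ltW Lam_gt0) _) _.
  move=> k; rewrite !mxE /pow_profile -/c /= -[_ ^+ m]ger0_norm ?exprn_even_ge0 // normrX.
  by rewrite mulr_ge0 ?exprn_ge0 //= ler_wpM2l // lerXn2r ?nnegrE ?(le_trans _ (zyq k)).
rewrite le_eqVlt; apply/orP; left; apply/eqP.
by rewrite /L /barrier_level /c /n /= expr2 invfM; ring.
Qed.

Lemma subsol_le_barrier_at_max (A rho : R) (y z : 'rV[R]_d) (e : R) :
  0 < rho -> A = (rho ^+ 2 / L) `^ (2 - gamma)^-1 -> U z -> 0 < e ->
  (forall w, eball z e w -> U w -> u w - barrier A rho n y w <= u z - barrier A rho n y z) ->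
  (forall k, `|z ord0 k - y ord0 k| <= rho) ->
  u z <= barrier A rho n y z.
Proof.
move=> rho0 Adef Uz e0 zmax zy; rewrite leNgt; apply/negP => psi_lt.
have L0 : 0 < L by rewrite mulr_gt0 // mulr_gt0 // ltr0n.
have A0 : 0 < A by rewrite Adef powR_gt0 // divr_gt0 // exprn_gt0.
have g1 : 0 < gamma - 1 by case/andP: gamma12; rewrite subr_gt0.
set psi := barrier A rho n y.
have psiC2 : C2_on (eball z e) psi by exact: C2_on_barrier.
have Fpsi := u_sub Uz e0 psiC2 zmax.
pose t k := `|(z ord0 k - y ord0 k) / rho|.
have [i imax] := exists_ord_max (Ordinal d_gt0) t.
have t01 : 0 <= t i <= 1.
  by rewrite /t normr_ge0 normrM [`|rho^-1|]gtr0_norm ?invr_gt0 // ler_pdivrMr // mul1r zy.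
have F_le : F (hessian psi z) <= L * A / rho ^+ 2 * t i ^+ m.
  by apply: elliptic_barrier_le => //; exact: ltW.
have n_even : ~~ odd n by rewrite /= negbK.
have psi_ge : A * t i ^+ n <= psi z by apply: barrier_ge_coord => //; exact: ltW.
have Aq0 : 0 <= A * t i ^+ n by rewrite mulr_ge0 ?exprn_ge0 ?(ltW A0) ?normr_ge0.
have := le_trans Fpsi F_le; apply/negP; rewrite -ltNge.
apply: le_lt_trans (barrier_power_ineq gamma12 L0 rho0 Adef t01 m_large) _.
apply: le_lt_trans (ge0_ler_powR (ltW g1) _ _ psi_ge) _; rewrite ?nnegrE ?(le_trans Aq0 psi_ge) //.
by rewrite gt0_ltr_powR ?nnegrE // (le_trans (le_trans Aq0 psi_ge)) // ltW.
Qed.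

End BarrierComparison.

Section NonDegeneracy.
Variables (R : realType) (d : nat) (Lam gamma : R) (F : 'M[R]_d -> R).
Variables (x0 : 'rV[R]_d) (R0 : R) (u : 'rV[R]_d -> R) (m : nat).
Hypotheses (d_gt0 : (0 < d)%N) (Lam_gt0 : 0 < Lam) (gamma12 : 1 < gamma < 2).
Hypotheses (ellF : unif_elliptic Lam F) (F0 : F 0 = 0).
Hypotheses (u_cont : {in eball x0 R0, continuous u})
  (u_sub : visc_subsol F gamma (eball x0 R0) u)
  (x0_free : closure [set x | 0 < u x] x0).
Hypotheses (m_even : ~~ odd m) (m_large : (m.+2)%:R * (gamma - 1) <= m%:R).

Lemma sup_sphere_ge_barrier (r : R) : 0 < r < R0 ->
  ((2 * r) ^+ 2 / barrier_level Lam m) `^ (2 - gamma)^-1 / (4 * d%:R) ^+ m.+2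
    <= sup (u @` esphere x0 r).
Proof.
move=> /andP[r0 rR0].
set A := (_ / barrier_level Lam m) `^ _.
rewrite real_leNgt ?num_real //; apply/negP => sup_lt.
have dpos : 0 < d%:R :> R by rewrite ltr0n.
have A0 : 0 < A by rewrite powR_gt0 // divr_gt0 ?exprn_gt0 ?mulr_gt0 // !mulr_gt0 ?ltr0n.
set eps := r / (2 * d%:R).
have d1 : 1 <= d%:R :> R by rewrite ler1n.
have eps_r : eps <= r by rewrite ler_pdivrMr ?mulr_gt0 // ler_peMr ?ltW //; lra.
have eps0 : 0 < eps by rewrite divr_gt0 ?mulr_gt0.
have [y uy yx0] := closure_exists_near x0_free eps0.
set psi := barrier A (2 * r) m.+2 y.
set K := ecball x0 r.
have KU : K `<=` eball x0 R0 by move=> w Kw; apply: le_lt_trans rR0.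
have Ky : K y.
  apply: le_trans (enorm_le_mx_norm _) _; apply: le_trans (ler_wpM2l (ler0n _ _) (ltW yx0)) _.
  have -> : d%:R * eps = r / 2 by rewrite /eps; field; rewrite gt_eqF.
  lra.
have u_contK : {in K, continuous u}.
  by move=> w /set_mem /KU Uw; apply: u_cont; rewrite inE.
have Kc : compact K by exact: compact_ecball.
have K0 : K !=set0 by exists y.
have [c _ cmax] := EVT_max_rV K0 Kc (continuous_in_subspaceT u_contK).
have [z /set_mem Kz zmax] : exists2 z, z \in K & forall w, w \in K -> u w - psi w <= u z - psi z.
  apply: EVT_max_rV K0 Kc (continuous_in_subspaceT _) => w Kw.
  by apply: continuousB; [exact: u_contK | exact: continuous_barrier].
have z_pos : 0 < u z - psi z.
  by apply: lt_le_trans (zmax y (mem_set Ky)); rewrite /psi barrier_center subr0.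
have z_in : eball x0 r z.
  rewrite /eball /= lt_def Kz andbT; apply/eqP => zr; move: z_pos; apply/negP.
  rewrite -leNgt subr_le0.
  have u_sup : u z <= sup (u @` esphere x0 r).
    apply: ub_le_sup; last by exists z.
    by exists (u c) => _ [w wr <-]; apply: cmax; apply: mem_set; rewrite /K /ecball /= wr.
  have psi_sphere : A / (4 * d%:R) ^+ m.+2 <= psi z.
    by apply: barrier_ge_on_sphere (ltW yx0) (esym zr) => //; [rewrite /= negbK | exact: ltW].
  exact: le_trans u_sup (le_trans (ltW sup_lt) psi_sphere).
have [e e0 ze] := eball_subset_eball z_in.
have zy k : `|z ord0 k - y ord0 k| <= 2 * r.
  have := le_trans (mx_normr_coord (z - y) k) (ler_distD x0 z y); rewrite !mxE => /le_trans; apply.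
  have := le_trans (mx_norm_le_enorm (z - x0)) Kz.
  by rewrite distrC [`|x0 - y|]distrC; lra.
have touch w : eball z e w -> eball x0 R0 w -> u w - psi w <= u z - psi z.
  by move=> /ze zw _; apply: zmax; apply: mem_set; exact: ltW.
have := subsol_le_barrier_at_max d_gt0 Lam_gt0 gamma12 ellF F0 u_sub m_even m_large
  (mulr_gt0 (ltr0Sn _ 1) r0) erefl (KU z Kz) e0 touch zy.
by rewrite -subr_le0 leNgt z_pos.
Qed.

End NonDegeneracy.

Unset Implicit Arguments. Set Strict Implicit.

Theorem corollary2p10 (R : realType) (d : nat) (Lam gamma : R) :
  (1 <= d)%N -> 1 <= Lam -> 1 < gamma < 2 ->
  exists C : R, 0 < C /\
    forall (F : 'M[R]_d -> R) (R0 : R) (x0 : 'rV[R]_d) (u : 'rV[R]_d -> R),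
      standing_assumptions Lam F -> 0 < R0 ->
      classP F gamma R0 x0 u ->
      forall r : R, 0 < r < R0 ->
        sup (u @` esphere x0 r) >= C * r `^ (2 / (2 - gamma)).
Proof.
move=> d_gt0 Lam1 gamma12.
have Lam_gt0 : 0 < Lam := lt_le_trans ltr01 Lam1.
have [m [m_even m_large]] := exists_even_exponent gamma12.
have L_gt0 : 0 < barrier_level Lam m by rewrite mulr_gt0 // mulr_gt0 // ltr0n.
exists ((4 / barrier_level Lam m) `^ (2 - gamma)^-1 / (4 * d%:R) ^+ m.+2); split.
  by rewrite divr_gt0 ?powR_gt0 ?divr_gt0 // exprn_gt0 // mulr_gt0 // ltr0n.
move=> F R0 x0 u [ellF _ F0 _ _] _ [u_cont _ u_sub _ [x0_free _]] r r_in.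
have := sup_sphere_ge_barrier d_gt0 Lam_gt0 gamma12 ellF F0 u_cont u_sub x0_free
  m_even m_large r_in.
by case/andP: r_in => r_gt0 _; rewrite powR_square_scale // mulrAC.
Qed.
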